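(* Let $\{z_n\}_{n\ge 0}$ be a sequence of positive real numbers satisfying $a_nz_{n+1}=b_nz_n+c_nz_{n-1}$ for all $n\ge 1$, where $a_n,b_n,c_n>0$. For $n\ge1$ let $\lambda_n=\frac{b_n+\sqrt{b_n^2+4a_nc_n}}{2a_n}$ be the positive root of $a_n\lambda^2-b_n\lambda-c_n=0$. Suppose that $z_0,z_1,z_2,z_3$ is log-convex (i.e. $z_0z_2\ge z_1^2$ and $z_1z_3\ge z_2^2$) and that $a_n\lambda_{n-1}\lambda_{n+1}-b_n\lambda_{n-1}-c_n\ge 0$ for all $n\ge 2$. Then $\{z_n\}_{n\ge 0}$ is log-convex.
   Context: A sequence $a_0,a_1,\ldots$ of nonnegative real numbers is log-convex if $a_{k-1}a_{k+1}\ge a_k^2$ for all $k\ge 1$. *)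

From Stdlib Require Import Reals.
Open Scope R_scope.

Definition log_convex (u : nat -> R) : Prop :=
  forall k : nat, (1 <= k)%nat -> u (k - 1)%nat * u (k + 1)%nat >= (u k) ^ 2.

Definition lam (a b c : nat -> R) (n : nat) : R :=
  (b n + sqrt (b n ^ 2 + 4 * a n * c n)) / (2 * a n).

(* With x_n = z_{n+1} / z_n the recurrence reads x_n = f_n (x_{n-1}), where
   f_n y = (b_n y + c_n) / (a_n y) is antitone on y > 0 with fixed point λ_n.
   Log-convexity at n is x_{n-1} <= x_n, i.e. x_{n-1} <= f_n (x_{n-1}), which
   holds iff x_{n-1} <= λ_n.  This invariant propagates two steps at a time:
   x_{n-1} <= λ_n gives x_n = f_n (x_{n-1}) >= λ_n, hence
   x_{n+1} = f_{n+1} (x_n) <= f_{n+1} (λ_n) <= λ_{n+2}, the last step being the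
   hypothesis on the λ's.  The initial cases are the log-convexity of z_0..z_3. *)

From Stdlib Require Import Reals Lra Lia Psatz.
Open Scope R_scope.

Definition pos_root (a b c : R) : R := (b + sqrt (b ^ 2 + 4 * a * c)) / (2 * a).

Definition ratio_map (a b c y : R) : R := (b * y + c) / (a * y).

Section PositiveRoot.

Variables a b c : R.
Hypothesis ha : 0 < a.
Hypothesis hc : 0 < c.

Lemma pos_root_pos : 0 < pos_root a b c.
Proof.
  unfold pos_root.
  set (s := sqrt (b ^ 2 + 4 * a * c)).
  assert (Hss : s * s = b ^ 2 + 4 * a * c) by (apply sqrt_sqrt; nra).
  assert (Hs : 0 <= s) by apply sqrt_pos.
  apply Rdiv_lt_0_compat; nra.
Qed.

Lemma pos_root_eq : a * pos_root a b c ^ 2 = b * pos_root a b c + c.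
Proof.
  unfold pos_root.
  set (s := sqrt (b ^ 2 + 4 * a * c)).
  assert (Hss : s * s = b ^ 2 + 4 * a * c) by (apply sqrt_sqrt; nra).
  field_simplify; try lra.
  replace (s ^ 2) with (s * s) by ring.
  rewrite Hss. field. lra.
Qed.

Lemma ratio_map_pos_root : ratio_map a b c (pos_root a b c) = pos_root a b c.
Proof.
  pose proof pos_root_pos as Hr.
  unfold ratio_map.
  rewrite <- (Rmult_1_r (b * pos_root a b c + c)), <- pos_root_eq.
  field. lra.
Qed.

Lemma ratio_map_antitone y y' :
  0 < y -> y <= y' -> ratio_map a b c y' <= ratio_map a b c y.
Proof.
  intros Hy Hyy'. unfold ratio_map.
  replace ((b * y' + c) / (a * y')) with (b / a + c / (a * y')) by (field; lra).
  replace ((b * y + c) / (a * y)) with (b / a + c / (a * y)) by (field; lra).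
  apply Rplus_le_compat_l, Rmult_le_compat_l; [lra|].
  apply Rinv_le_contravar; nra.
Qed.

Lemma pos_root_le_ratio_map y :
  0 < y -> y <= pos_root a b c -> pos_root a b c <= ratio_map a b c y.
Proof.
  intros Hy Hyr.
  rewrite <- ratio_map_pos_root at 1.
  now apply ratio_map_antitone.
Qed.

Lemma le_ratio_map_iff y :
  0 < y -> (y <= ratio_map a b c y <-> y <= pos_root a b c).
Proof.
  intros Hy. split; intros H.
  - destruct (Rle_lt_dec y (pos_root a b c)) as [Hle | Hlt]; [exact Hle|].
    pose proof (ratio_map_antitone _ _ pos_root_pos (Rlt_le _ _ Hlt)) as Hanti.
    rewrite ratio_map_pos_root in Hanti. lra.
  - pose proof (pos_root_le_ratio_map y Hy H). lra.
Qed.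

End PositiveRoot.

Lemma ratio_map_le_iff a b c y w :
  0 < a -> 0 < y -> (ratio_map a b c y <= w <-> b * y + c <= a * y * w).
Proof.
  intros Ha Hy. unfold ratio_map.
  assert (Hay : 0 < a * y) by nra.
  replace (b * y + c) with ((b * y + c) / (a * y) * (a * y)) at 2 by (field; lra).
  replace (a * y * w) with (w * (a * y)) by ring.
  split; intros H.
  - now apply Rmult_le_compat_r; [lra|].
  - exact (Rmult_le_reg_r _ _ _ Hay H).
Qed.

Lemma log_convex_at_iff (z : nat -> R) n :
  (forall k, 0 < z k) ->
  z n * z (S (S n)) >= z (S n) ^ 2 <-> z (S n) / z n <= z (S (S n)) / z (S n).
Proof.
  intros hz.
  pose proof (hz n). pose proof (hz (S n)).
  assert (Hp : 0 < z n * z (S n)) by nra.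
  replace (z (S n) ^ 2) with (z (S n) / z n * (z n * z (S n))) by (field; lra).
  replace (z n * z (S (S n))) with (z (S (S n)) / z (S n) * (z n * z (S n)))
    by (field; lra).
  split; intros Hle.
  - exact (Rmult_le_reg_r _ _ _ Hp (Rge_le _ _ Hle)).
  - apply Rle_ge, Rmult_le_compat_r; lra.
Qed.

Lemma ratio_map_ratio a b c z0 z1 z2 :
  0 < a -> 0 < z0 -> 0 < z1 -> a * z2 = b * z1 + c * z0 ->
  z2 / z1 = ratio_map a b c (z1 / z0).
Proof.
  intros Ha H0 H1 Hrec. unfold ratio_map.
  apply (Rmult_eq_reg_l a); [|lra].
  rewrite Rmult_div_assoc, Hrec. field. repeat split; lra.
Qed.

(* [lam a b c n] is convertible to [pos_root (a n) (b n) (c n)], so the lemmas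
   above apply to it directly. *)
Section RatioOrbit.

Variables a b c x : nat -> R.
Hypothesis ha : forall n, (1 <= n)%nat -> 0 < a n.
Hypothesis hc : forall n, (1 <= n)%nat -> 0 < c n.
Hypothesis hx : forall n, 0 < x n.
Hypothesis hx_succ :
  forall n, x (S n) = ratio_map (a (S n)) (b (S n)) (c (S n)) (x n).
Hypothesis hlam : forall n,
  ratio_map (a (S (S n))) (b (S (S n))) (c (S (S n))) (lam a b c (S n))
    <= lam a b c (S (S (S n))).

Lemma ratio_le_succ_iff n : x n <= x (S n) <-> x n <= lam a b c (S n).
Proof.
  rewrite hx_succ.
  apply le_ratio_map_iff; auto with arith.
Qed.

Lemma ratio_below_root_SS n :
  x n <= lam a b c (S n) -> x (S (S n)) <= lam a b c (S (S (S n))).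
Proof.
  intros Hn.
  assert (Hroot : lam a b c (S n) <= x (S n)).
  { rewrite hx_succ. apply pos_root_le_ratio_map; auto with arith. }
  rewrite hx_succ.
  eapply Rle_trans; [|apply hlam].
  apply ratio_map_antitone; [auto with arith | auto with arith | | exact Hroot].
  apply pos_root_pos; auto with arith.
Qed.

Lemma ratio_nondecreasing :
  x 0 <= x 1 -> x 1 <= x 2 -> forall n, x n <= x (S n).
Proof.
  rewrite !ratio_le_succ_iff. intros H0 H1.
  assert (Hpair : forall n,
    x n <= lam a b c (S n) /\ x (S n) <= lam a b c (S (S n))).
  { induction n as [|n [IHn IHSn]]; [now split|].
    split; [exact IHSn|]. now apply ratio_below_root_SS. }
  intro n. apply ratio_le_succ_iff, Hpair.
Qed.

End RatioOrbit.

Theorem theorem3p1 (z a b c : nat -> R)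
  (hz : forall n : nat, 0 < z n)
  (ha : forall n : nat, (1 <= n)%nat -> 0 < a n)
  (hb : forall n : nat, (1 <= n)%nat -> 0 < b n)
  (hc : forall n : nat, (1 <= n)%nat -> 0 < c n)
  (hrec : forall n : nat, (1 <= n)%nat ->
     a n * z (n + 1)%nat = b n * z n + c n * z (n - 1)%nat)
  (h02 : z 0%nat * z 2%nat >= (z 1%nat) ^ 2)
  (h13 : z 1%nat * z 3%nat >= (z 2%nat) ^ 2)
  (hlam : forall n : nat, (2 <= n)%nat ->
     a n * lam a b c (n - 1)%nat * lam a b c (n + 1)%nat
       - b n * lam a b c (n - 1)%nat - c n >= 0) :
  log_convex z.
Proof.
  set (x := fun n => z (S n) / z n).
  assert (Hx : forall n, 0 < x n) by (intro; apply Rdiv_lt_0_compat; auto).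
  assert (Hx_succ : forall n,
    x (S n) = ratio_map (a (S n)) (b (S n)) (c (S n)) (x n)).
  { intro n. pose proof (hrec (S n) ltac:(lia)) as Hn.
    replace (S n + 1)%nat with (S (S n)) in Hn by lia.
    replace (S n - 1)%nat with n in Hn by lia.
    apply ratio_map_ratio; auto with arith. }
  assert (Hlam : forall n,
    ratio_map (a (S (S n))) (b (S (S n))) (c (S (S n))) (lam a b c (S n))
      <= lam a b c (S (S (S n)))).
  { intro n. pose proof (hlam (S (S n)) ltac:(lia)) as Hn.
    replace (S (S n) - 1)%nat with (S n) in Hn by lia.
    replace (S (S n) + 1)%nat with (S (S (S n))) in Hn by lia.
    assert (Hpos : 0 < lam a b c (S n)) by (apply pos_root_pos; auto with arith).
    apply ratio_map_le_iff; [auto with arith | exact Hpos | lra]. }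
  intros k Hk. destruct k as [|n]; [lia|].
  replace (S n - 1)%nat with n by lia. replace (S n + 1)%nat with (S (S n)) by lia.
  apply log_convex_at_iff; [exact hz|].
  apply (ratio_nondecreasing a b c x); auto; apply log_convex_at_iff; auto.
Qed.
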